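(* Let $q$ be a prime power and let $C_1\subseteq\mathbb{F}_q^n$ and $C_2\subseteq\mathbb{F}_q^n$ be linear codes of dimensions $k_1$ and $k_2$ (with minimum distances $d_1,d_2$) such that $C_2^\perp\subseteq C_1$, where $C_2^\perp$ is the dual of $C_2$ with respect to the standard bilinear form on $\mathbb{F}_q^n$. Let $k=k_1+k_2-n$ and let $\mathcal{C}\subseteq(\mathbb{C}^q)^{\otimes n}$ be the associated CSS code. Then there exists a quantum circuit encoding $\mathcal{C}$, i.e. a unitary $U$ on $(\mathbb{C}^q)^{\otimes n}$ together with a set $I\subseteq\{1,\dots,n\}$ of $k$ qudit positions such that $U$ maps the subspace $\mathrm{span}\{|x\rangle : x\in\mathbb{F}_q^n,\ x_j=0 \text{ for all } j\notin I\}$ onto $\mathcal{C}$, which is a product of $n-k_2$ gates $F$, at most $A:=k_1n-\binom{k_1+1}{2}$ gates $\mathrm{ADD}$, and at most $A+(n-1)$ multiplication gates $M_\gamma$.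
   Context: Let $q=p^m$ with $p$ prime, $\omega=\exp(2\pi i/p)$, and for $\alpha\in\mathbb{F}_q$ let $\mathrm{tr}(\alpha)=\sum_{i=0}^{m-1}\alpha^{p^i}\in\mathbb{F}_p$ (identified with $\mathbb{Z}/p\mathbb{Z}$ in exponents of $\omega$). A qudit is $\mathbb{C}^q$ with orthonormal basis $\{|x\rangle: x\in\mathbb{F}_q\}$; $n$ qudits have basis $|x\rangle=|x_1\rangle\otimes\cdots\otimes|x_n\rangle$, $x\in\mathbb{F}_q^n$. Gates (acting on the indicated qudits, identity elsewhere): $M_\gamma=\sum_{y}|\gamma y\rangle\langle y|$ for $\gamma\in\mathbb{F}_q\setminus\{0\}$; $F=\frac{1}{\sqrt q}\sum_{x,z\in\mathbb{F}_q}\omega^{\mathrm{tr}(xz)}|z\rangle\langle x|$; $\mathrm{ADD}^{(a,b)}=\sum_{x,y}|x\rangle_a|x+y\rangle_b\langle y|_b\langle x|_a$ on an ordered pair of distinct qudits $(a,b)$. The CSS code associated with $C_1,C_2$ (with $C_2^\perp\subseteq C_1$) is the subspace of $(\mathbb{C}^q)^{\otimes n}$ spanned by the states $|\psi_w\rangle=|C_2^\perp|^{-1/2}\sum_{c\in C_2^\perp}|c+w\rangle$ for $w\in C_1$; it has dimension $q^{k}$ with $k=k_1+k_2-n$. *)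

From HB Require Import structures.
From mathcomp Require Import all_boot all_order all_algebra all_field.
Set Implicit Arguments. Unset Strict Implicit. Unset Printing Implicit Defensive.
Import Order.TTheory GRing.Theory Num.Theory.
Local Open Scope ring_scope.

Section Qudits.
Variables (F : finFieldType) (n : nat).

(* q = #|F| = p ^ m with p the characteristic *)
Definition qsz : nat := #|F|.
Definition pch : nat := pdiv #|F|.
Definition mdeg : nat := logn pch #|F|.

Definition trF (a : F) : F := \sum_(i < mdeg) a ^+ (pch ^ i).

(* the representative in {0,...,p-1} of tr(a) in the prime field *)
Definition trN (a : F) : nat :=
  if [pick k : 'I_pch | (k%:R : F) == trF a] is Some k then val k else 0%N.

(* omega = exp(2 pi i / p); p.-root (-1) = exp(i pi / p) in algC *)
Definition omega : algC := (pch.-root (-1)) ^+ 2.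

Notation cfg := 'rV[F]_n.
Definition N : nat := #|{: cfg}|.

Definition ket (x : cfg) : 'rV[algC]_N := delta_mx 0 (enum_rank x).

Definition upd (y : cfg) (a : 'I_n) (c : F) : cfg :=
  \row_j (if j == a then c else y 0 j).

(* operator with amplitude g y x = <x| G |y>; acts on row vectors by v *m G,
   so that  ket y *m opmx g = \sum_x g y x *: ket x *)
Definition opmx (g : cfg -> cfg -> algC) : 'M[algC]_N :=
  \matrix_(i, j) g (enum_val i) (enum_val j).

Definition ampM (gam : F) (a : 'I_n) (y x : cfg) : algC :=
  (x == upd y a (gam * y 0 a))%:R.
(* F on qudit a : |y> -> q^{-1/2} sum_z omega^{tr(y_a z)} |.. z ..> *)
Definition ampF (a : 'I_n) (y x : cfg) : algC :=
  (x == upd y a (x 0 a))%:R * omega ^+ trN (y 0 a * x 0 a) / sqrtC (qsz%:R).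
Definition ampADD (a b : 'I_n) (y x : cfg) : algC :=
  (x == upd y b (y 0 a + y 0 b))%:R.

Inductive gate : Type :=
  | GF of 'I_n
  | GM of F & 'I_n
  | GADD of 'I_n & 'I_n.

Definition gate_wf (g : gate) : bool :=
  match g with
  | GF _ => true
  | GM gam _ => gam != 0
  | GADD a b => a != b
  end.

Definition gate_mx (g : gate) : 'M[algC]_N :=
  match g with
  | GF a => opmx (ampF a)
  | GM gam a => opmx (ampM gam a)
  | GADD a b => opmx (ampADD a b)
  end.

Definition isF (g : gate) := if g is GF _ then true else false.
Definition isM (g : gate) := if g is GM _ _ then true else false.
Definition isADD (g : gate) := if g is GADD _ _ then true else false.

(* the circuit [:: g1; g2; ...] applies g1 first: U = G1 *m G2 *m ... *)
Definition circuit_mx (c : seq gate) : 'M[algC]_N :=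
  foldr (fun g acc => gate_mx g *m acc) 1%:M c.

Definition dotF (x y : cfg) : F := \sum_(j < n) x 0 j * y 0 j.
Definition in_dual (C : {vspace cfg}) (x : cfg) : bool :=
  [forall c : cfg, (c \in C) ==> (dotF x c == 0)].

Definition css_state (C2 : {vspace cfg}) (w : cfg) : 'rV[algC]_N :=
  (sqrtC (#|[pred x | in_dual C2 x]|%:R))^-1 *:
    \sum_(c : cfg | in_dual C2 c) ket (c + w).
Definition css_space (C1 C2 : {vspace cfg}) : 'M[algC]_N :=
  (\sum_(w : cfg | w \in C1) <<css_state C2 w>>)%MS.

Definition supp_in (I : {set 'I_n}) (x : cfg) : bool :=
  [forall j : 'I_n, (j \notin I) ==> (x 0 j == 0)].
Definition input_space (I : {set 'I_n}) : 'M[algC]_N :=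
  (\sum_(x : cfg | supp_in I x) <<ket x>>)%MS.

End Qudits.

From HB Require Import structures.
From mathcomp Require Import all_boot all_order all_algebra all_field.
From mathcomp Require Import zify ring.
Set Implicit Arguments. Unset Strict Implicit. Unset Printing Implicit Defensive.
Import Order.TTheory GRing.Theory Num.Theory.
Local Open Scope ring_scope.

(* Bring C2 into systematic form on an information set Q: C2 has a basis g_q
   (q in Q) with g_q(q') = [q = q'], and then the vectors
   h_s = delta_s - sum_q g_q(s) delta_q (s outside Q) form a basis of C2^perp with
   h_s(s') = [s = s'] on S = ~Q.  Since C2^perp <= C1, these extend by vectors
   e_i (i in I, I <= Q) vanishing on S to a basis of C1, so |I| = k1 - (n - k2) = k.
   On |x> with x supported on I, F gates on the qudits of S produce the uniform
   superposition of the |x + z>, z supported on S.  A circuit of ADD and M gates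
   then maps x + z to sum_i x_i e_i + sum_s z_s h_s; as z ranges over F^S the
   second sum ranges over C2^perp, so |x> is sent to the CSS state of
   sum_i x_i e_i.  Each qudit t receives a linear combination of sources
   (I for t in Q \ I, then S for t in Q), at the price of one ADD and one M per
   source, and counting gives the bounds. *)

(** * Systematic bases *)

Section SystematicBasis.
Variables (F : finFieldType) (n : nat).
Local Notation cfg := 'rV[F]_n.

Lemma coord_sum (I : finType) (Q : pred I) (a : I -> F) (v : I -> cfg) t :
  (\sum_(j | Q j) a j *: v j) 0 t = \sum_(j | Q j) a j * v j 0 t.
Proof. by rewrite summxE; apply: eq_bigr => j _; rewrite mxE. Qed.

Lemma coord_sum_delta (P : {set 'I_n}) (a : 'I_n -> F) (v : 'I_n -> cfg) t :
  t \in P -> (forall j j', j \in P -> j' \in P -> v j 0 j' = (j == j')%:R) ->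
  (\sum_(j in P) a j *: v j) 0 t = a t.
Proof.
move=> tP vd; rewrite coord_sum (bigD1 t) //= vd // eqxx mulr1 big1 ?addr0 //.
by move=> j /andP[jP jt]; rewrite vd // (negPf jt) mulr0.
Qed.

Fixpoint pivoted (L : seq ('I_n * cfg)) : bool :=
  if L is (t, v) :: L' then
    [&& v 0 t != 0, all (fun pv : 'I_n * cfg => pv.2 0 t == 0) L' & pivoted L']
  else true.

Lemma coord_span_eq0 (X : seq cfg) (t : 'I_n) (v : cfg) :
  all (fun x : cfg => x 0 t == 0) X -> v \in <<X>>%VS -> v 0 t = 0.
Proof.
elim: X v => [|x X IH] v /=; first by rewrite span_nil memv0 => _ /eqP ->; rewrite mxE.
move=> /andP[/eqP xt X0]; rewrite span_cons => /memv_addP[_ /vlineP[k ->] [u uX ->]].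
by rewrite !mxE xt (IH _ X0 uX) mulr0 addr0.
Qed.

Lemma pivoted_free L : pivoted L -> free (map snd L).
Proof.
elim: L => [|[t v] L IH] /=; first by rewrite /free span_nil dimv0.
case/and3P=> vt L0 pL; rewrite free_cons IH // andbT.
by apply: contra vt => /(coord_span_eq0 _) ->; rewrite ?eqxx ?all_map.
Qed.

Lemma pivoted_cat L1 L2 : pivoted L1 -> pivoted L2 ->
  all (fun tv : 'I_n * cfg => all (fun pv : 'I_n * cfg => pv.2 0 tv.1 == 0) L2) L1 ->
  pivoted (L1 ++ L2).
Proof.
elim: L1 => [|[t v] L1 IH] //= /and3P[-> L10 pL1] pL2 /andP[/= L20 L12].
by rewrite all_cat L10 L20 IH.
Qed.

Lemma pivoted_delta (s : seq 'I_n) (w : 'I_n -> cfg) :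
  uniq s -> {in s &, forall p p', w p 0 p' = (p == p')%:R} ->
  pivoted [seq (p, w p) | p <- s].
Proof.
elim: s => [|p s IH] //= /andP[ps us] wd.
have wd' : {in s &, forall p p', w p 0 p' = (p == p')%:R}.
  by move=> a b ha hb; apply: wd; rewrite inE ?ha ?hb orbT.
rewrite wd ?mem_head // eqxx oner_eq0 IH //= andbT all_map.
apply/allP => p' p's /=; rewrite wd ?inE ?p's ?eqxx ?orbT //.
have -> : (p' == p) = false by apply: contraNF ps => /eqP <-.
by rewrite eqxx.
Qed.

Section Extension.
Variables (C : {vspace cfg}) (P : {set 'I_n}) (w : 'I_n -> cfg).
Hypothesis wC : forall p, p \in P -> w p \in C.
Hypothesis w_delta : forall p p', p \in P -> p' \in P -> w p 0 p' = (p == p')%:R.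

(* Once [spans_kernel J e] also holds, the [w p] and [e j] form a basis of [C]
   in systematic form on the information set [P :|: J]. *)
Definition partial_basis (J : {set 'I_n}) (e : 'I_n -> cfg) :=
  [/\ [disjoint J & P], forall j, j \in J -> e j \in C,
      forall j p, j \in J -> p \in P -> e j 0 p = 0 &
      forall j j', j \in J -> j' \in J -> e j 0 j' = (j == j')%:R].

Definition basis_seq (J : {set 'I_n}) (e : 'I_n -> cfg) :=
  [seq w p | p <- enum P] ++ [seq e j | j <- enum J].

Definition spans_kernel (J : {set 'I_n}) (e : 'I_n -> cfg) :=
  forall c, c \in C -> (forall p, p \in P -> c 0 p = 0) -> c = \sum_(j in J) c 0 j *: e j.

Lemma basis_seq_free J e : partial_basis J e -> free (basis_seq J e).
Proof.
case=> _ _ e0 ed; rewrite (_ : basis_seq J e = map snd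
  ([seq (p, w p) | p <- enum P] ++ [seq (j, e j) | j <- enum J])); last first.
  by rewrite map_cat -!map_comp.
apply: pivoted_free; apply: pivoted_cat.
- by apply: pivoted_delta (enum_uniq _) _ => p p'; rewrite !mem_enum; apply: w_delta.
- by apply: pivoted_delta (enum_uniq _) _ => j j'; rewrite !mem_enum; apply: ed.
rewrite all_map; apply/allP => p; rewrite mem_enum => pP /=.
by rewrite all_map; apply/allP => j; rewrite mem_enum => jJ /=; rewrite e0.
Qed.

Lemma basis_seq_sub J e : partial_basis J e -> (<<basis_seq J e>> <= C)%VS.
Proof.
case=> _ eC _ _; apply/span_subvP => x; rewrite mem_cat.
by case/orP => /mapP[p]; rewrite mem_enum => pP ->; [apply: wC | apply: eC].
Qed.

Lemma size_basis_seq J e : size (basis_seq J e) = (#|P| + #|J|)%N.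
Proof. by rewrite size_cat !size_map -!cardE. Qed.

Lemma partial_basis_card J e : partial_basis J e -> (#|P| + #|J| <= \dim C)%N.
Proof.
move=> bJ; rewrite -(size_basis_seq J e) -(eqP (basis_seq_free bJ)).
exact/dimvS/basis_seq_sub.
Qed.

Lemma partial_basis_full J e :
  partial_basis J e -> spans_kernel J e -> (#|P| + #|J|)%N = \dim C.
Proof.
move=> bJ eJ; apply/eqP; rewrite eqn_leq (partial_basis_card bJ) /=.
rewrite -(size_basis_seq J e) -(eqP (basis_seq_free bJ)).
apply/dimvS/subvP => c cC.
pose c' := c - \sum_(p in P) c 0 p *: w p.
have c'C : c' \in C by rewrite memvB // memv_suml // => p pP; rewrite memvZ // wC.
have c'P p : p \in P -> c' 0 p = 0.
  by move=> pP; rewrite !mxE coord_sum_delta ?subrr.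
rewrite -(subrK (\sum_(p in P) c 0 p *: w p) c) -/c' (eJ c' c'C c'P) addrC.
rewrite memvD // memv_suml // => x xP; rewrite memvZ // memv_span // mem_cat.
  by rewrite map_f ?mem_enum.
by rewrite map_f ?mem_enum ?orbT.
Qed.

Lemma residual_pivot J e c : partial_basis J e -> c \in C ->
  (forall p, p \in P -> c 0 p = 0) -> c != \sum_(j in J) c 0 j *: e j ->
  exists i c', [/\ i \notin P, i \notin J, c' \in C, c' 0 i = 1 &
    forall j, j \in P :|: J -> c' 0 j = 0].
Proof.
case=> _ eC e0 ed cC cP ce.
pose r := c - \sum_(j in J) c 0 j *: e j.
have r0 j : j \in P :|: J -> r 0 j = 0.
  rewrite !mxE; case/setUP => jX; last by rewrite coord_sum_delta ?subrr.
  by rewrite coord_sum big1 ?subr0 ?cP // => j' j'J; rewrite e0 // mulr0.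
have [i ri] : exists i, r 0 i != 0 by apply/rV0Pn; rewrite subr_eq0.
have rC : r \in C by rewrite memvB // memv_suml // => j jJ; rewrite memvZ // eC.
have iPJ : i \notin P :|: J by apply: contra ri => /r0 ->.
clearbody r; exists i, ((r 0 i)^-1 *: r).
move: iPJ; rewrite inE negb_or => /andP[-> ->].
by split=> // [|| j /r0]; rewrite ?memvZ ?mxE ?mulVf // => ->; rewrite mulr0.
Qed.

Lemma partial_basis_grow J e i c : partial_basis J e -> i \notin P -> i \notin J ->
  c \in C -> c 0 i = 1 -> (forall j, j \in P :|: J -> c 0 j = 0) ->
  partial_basis (i |: J) (fun j => if j == i then c else e j - e j 0 i *: c).
Proof.
case=> dJ eC e0 ed iP iJ cC ci c0.
have neq_i j : j \in J -> (j == i) = false by move=> jJ; apply: contraNF iJ => /eqP <-.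
split.
- by rewrite -setI_eq0 setIUl (disjoint_setI0 dJ) setU0 setI_eq0 disjoints1.
- move=> j /setU1P[->|jJ]; rewrite ?eqxx ?neq_i //.
  by rewrite memvB ?memvZ ?eC.
- move=> j p /setU1P[->|jJ] pP; rewrite ?eqxx ?c0 ?inE ?pP //.
  by rewrite neq_i // !mxE (e0 j p) // (c0 p) ?inE ?pP // mulr0 subrr.
move=> j j' /setU1P[->|jJ] /setU1P[->|j'J].
- by rewrite !eqxx.
- by rewrite eqxx (c0 j') ?inE ?j'J ?orbT // eq_sym neq_i.
- by rewrite neq_i // !mxE ci mulr1 subrr.
by rewrite neq_i // !mxE (ed j j') // (c0 j') ?inE ?j'J ?orbT // mulr0 subr0.
Qed.

Lemma exists_systematic_basis : exists J e,
  [/\ partial_basis J e, (#|P| + #|J|)%N = \dim C & spans_kernel J e].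
Proof.
suff grow m J e : partial_basis J e -> (\dim C - #|J| < m)%N ->
    exists J e, [/\ partial_basis J e, (#|P| + #|J|)%N = \dim C & spans_kernel J e].
  apply: (grow (\dim C).+1 set0 (fun _ => 0)); last by rewrite cards0 subn0.
  by split=> [|j|j p|j j']; rewrite ?disjoints_subset ?sub0set ?inE.
elim: m J e => // m IH J e bJ.
have [eJ _|] := boolP [forall c : cfg, (c \in C) ==> [forall p in P, c 0 p == 0] ==>
   (c == \sum_(j in J) c 0 j *: e j)].
  have sJ : spans_kernel J e.
    move=> c cC cP; apply/eqP; move/forallP/(_ c): eJ; rewrite cC /= => /implyP.
    by apply; apply/forall_inP => p /cP ->.
  by exists J, e; split=> //; exact: partial_basis_full bJ sJ.
case/forallPn => c; rewrite !negb_imply => /and3P[cC /forall_inP cP ce].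
have [i [c' [iP iJ c'C c'i c'0]]] := residual_pivot bJ cC (fun p pP => eqP (cP p pP)) ce.
have bJ' := partial_basis_grow bJ iP iJ c'C c'i c'0.
move=> lt_m; apply: (IH _ _ bJ'); have := partial_basis_card bJ'.
by rewrite cardsU1 iJ; lia.
Qed.

End Extension.
End SystematicBasis.

(** * The dual code *)

Section DualCode.
Variables (F : finFieldType) (n : nat).
Local Notation cfg := 'rV[F]_n.

Lemma dotFC (x y : cfg) : dotF x y = dotF y x.
Proof. by apply: eq_bigr => j _; rewrite mulrC. Qed.

Lemma dotFDl (x y c : cfg) : dotF (x + y) c = dotF x c + dotF y c.
Proof. by rewrite /dotF -big_split; apply: eq_bigr => j _; rewrite mxE mulrDl. Qed.

Lemma dotFBl (x y c : cfg) : dotF (x - y) c = dotF x c - dotF y c.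
Proof. by rewrite /dotF -sumrB; apply: eq_bigr => j _; rewrite !mxE mulrBl. Qed.

Lemma dotF_suml (I : finType) (Q : pred I) (a : I -> F) (v : I -> cfg) (c : cfg) :
  dotF (\sum_(j | Q j) a j *: v j) c = \sum_(j | Q j) a j * dotF (v j) c.
Proof.
rewrite /dotF; under eq_bigr do rewrite coord_sum mulr_suml.
rewrite exchange_big; apply: eq_bigr => j _; rewrite mulr_sumr.
by apply: eq_bigr => t _; rewrite mulrA.
Qed.

Lemma in_dualP (C : {vspace cfg}) (x : cfg) :
  reflect (forall c, c \in C -> dotF x c = 0) (in_dual C x).
Proof.
apply: (iffP forallP) => [h c cC|h c]; first by move: (h c); rewrite cC => /eqP.
by apply/implyP => /h ->.
Qed.

Lemma in_dual_sum (C : {vspace cfg}) (I : finType) (Q : pred I) (a : I -> F) (v : I -> cfg) :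
  (forall j, Q j -> in_dual C (v j)) -> in_dual C (\sum_(j | Q j) a j *: v j).
Proof.
move=> vC; apply/in_dualP => c cC; rewrite dotF_suml big1 // => j Qj.
by rewrite (in_dualP _ _ (vC j Qj)) ?mulr0.
Qed.

Lemma in_dualD (C : {vspace cfg}) (x y : cfg) :
  in_dual C x -> in_dual C y -> in_dual C (x + y).
Proof.
by move=> /in_dualP xC /in_dualP yC; apply/in_dualP => c cC; rewrite dotFDl xC ?yC ?addr0.
Qed.

Lemma in_dualB (C : {vspace cfg}) (x y : cfg) :
  in_dual C x -> in_dual C y -> in_dual C (x - y).
Proof.
by move=> /in_dualP xC /in_dualP yC; apply/in_dualP => c cC; rewrite dotFBl xC ?yC ?subrr.
Qed.

Section StandardForm.
Variables (C : {vspace cfg}) (Q : {set 'I_n}) (g : 'I_n -> cfg).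
Hypothesis gC : forall q, q \in Q -> g q \in C.
Hypothesis g_delta : forall q q', q \in Q -> q' \in Q -> g q 0 q' = (q == q')%:R.
Hypothesis g_span : forall c, c \in C -> c = \sum_(q in Q) c 0 q *: g q.

Definition dual_vec (s : 'I_n) : cfg :=
  delta_mx 0 s - \sum_(q in Q) g q 0 s *: delta_mx 0 q.

Lemma dual_vec_coord s t :
  dual_vec s 0 t = (s == t)%:R - (if t \in Q then g t 0 s else 0).
Proof.
rewrite !mxE eqxx /= eq_sym coord_sum; congr (_ - _).
case: ifPn => tQ.
  rewrite (bigD1 t) //= mxE !eqxx mulr1 big1 ?addr0 // => q /andP[_ qt].
  by rewrite mxE eq_sym (negPf qt) mulr0.
rewrite big1 // => q qQ; rewrite mxE eqxx /= (_ : t == q = false) ?mulr0 //.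
by apply: contraNF tQ => /eqP ->.
Qed.

Lemma dual_vec_delta s s' : s' \notin Q -> dual_vec s 0 s' = (s == s')%:R.
Proof. by move=> s'Q; rewrite dual_vec_coord (negPf s'Q) subr0. Qed.

Lemma dual_vec_in_dual s : s \notin Q -> in_dual C (dual_vec s).
Proof.
move=> sQ; apply/in_dualP => c cC; rewrite dotFC (g_span cC) dotF_suml big1 // => q qQ.
suff -> : dotF (g q) (dual_vec s) = 0 by rewrite mulr0.
rewrite /dotF; under eq_bigr do rewrite dual_vec_coord mulrBr.
rewrite sumrB (bigD1 s) //= eqxx mulr1 big1 ?addr0; last first.
  by move=> t ts; rewrite eq_sym (negPf ts) mulr0.
rewrite (eq_bigr (fun t => if t \in Q then g q 0 t * g t 0 s else 0)); last first.
  by move=> t _; case: ifP; rewrite ?mulr0.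
rewrite -big_mkcond /= (bigD1 q) //= (g_delta qQ qQ) eqxx mul1r big1 ?addr0 ?subrr //.
by move=> t /andP[tQ tq]; rewrite g_delta // eq_sym (negPf tq) mul0r.
Qed.

Lemma in_dual_expand x : in_dual C x -> x = \sum_(s in ~: Q) x 0 s *: dual_vec s.
Proof.
move=> xC; apply/rowP => t; rewrite coord_sum.
have [tQ|tQ] := boolP (t \in Q); last first.
  rewrite (bigD1 t) ?inE //= dual_vec_delta // eqxx mulr1 big1 ?addr0 // => s /andP[_ st].
  by rewrite dual_vec_delta // (negPf st) mulr0.
have := in_dualP _ _ xC _ (gC tQ); rewrite /dotF (bigID [in Q]) /=.
rewrite (bigD1 t) //= g_delta // eqxx mulr1 big1 ?addr0; last first.
  by move=> j /andP[jQ jt]; rewrite g_delta // eq_sym (negPf jt) mulr0.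
move/eqP; rewrite addr_eq0 => /eqP ->; rewrite -sumrN.
apply: eq_big => [j|j]; first by rewrite inE.
move=> jQ; rewrite dual_vec_coord tQ (_ : j == t = false) ?sub0r ?mulrN //.
by apply: contraNF jQ => /eqP ->.
Qed.

End StandardForm.
End DualCode.

(** * Circuit semantics *)

Section Circuits.
Variables (F : finFieldType) (n : nat).
Local Notation cfg := 'rV[F]_n.
Local Notation gate := (gate F n).

Lemma upd_same (y : cfg) a c : upd y a c 0 a = c.
Proof. by rewrite mxE eqxx. Qed.

Lemma upd_other (y : cfg) a c j : j != a -> upd y a c 0 j = y 0 j.
Proof. by move=> ja; rewrite mxE (negPf ja). Qed.

Lemma upd_upd (y : cfg) t a b : upd (upd y t a) t b = upd y t b.
Proof. by apply/rowP => j; rewrite !mxE; case: eqP. Qed.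

Lemma upd_id (y : cfg) t : upd y t (y 0 t) = y.
Proof. by apply/rowP => j; rewrite !mxE; case: eqP => // ->. Qed.

Lemma ket_mul_opmx (g : cfg -> cfg -> algC) (y : cfg) :
  ket y *m opmx g = \sum_x g y x *: ket x.
Proof.
rewrite /ket -rowE; apply/rowP => j; rewrite !mxE enum_rankK summxE.
rewrite (bigD1 (enum_val j)) //= !mxE enum_valK !eqxx mulr1 big1 ?addr0 // => x xj.
rewrite !mxE eqxx /=; case: eqP => [e|]; last by rewrite mulr0.
by move: xj; rewrite e enum_rankK eqxx.
Qed.

Lemma ket_mul_opmx_det (g : cfg -> cfg -> algC) (f : cfg -> cfg) (y : cfg) :
  (forall x, g y x = (x == f y)%:R) -> ket y *m opmx g = ket (f y).
Proof.
move=> gf; rewrite ket_mul_opmx (bigD1 (f y)) //= gf eqxx scale1r big1 ?addr0 //.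
by move=> x /negPf xf; rewrite gf xf scale0r.
Qed.

Definition gate_act (g : gate) (y : cfg) : cfg :=
  match g with
  | GM gam a => upd y a (gam * y 0 a)
  | GADD a b => upd y b (y 0 a + y 0 b)
  | GF _ => y
  end.

Lemma ket_mul_gate_act (g : gate) y : ~~ isF g -> ket y *m gate_mx g = ket (gate_act g y).
Proof.
case: g => //= [gam a|a b] _; first exact: (ket_mul_opmx_det (f := fun y => upd y a (gam * y 0 a))).
exact: (ket_mul_opmx_det (f := fun y => upd y b (y 0 a + y 0 b))).
Qed.

Definition circuit_act (c : seq gate) (y : cfg) := foldl (fun y g => gate_act g y) y c.

Lemma circuit_act_cat (c1 c2 : seq gate) y :
  circuit_act (c1 ++ c2) y = circuit_act c2 (circuit_act c1 y).
Proof. exact: foldl_cat. Qed.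

Lemma circuit_mx_cat (c1 c2 : seq gate) :
  circuit_mx (c1 ++ c2) = circuit_mx c1 *m circuit_mx c2.
Proof. by elim: c1 => [|g c1 IH] /=; rewrite ?mul1mx // IH mulmxA. Qed.

Lemma ket_mul_circuit_act (c : seq gate) (y : cfg) :
  ~~ has (@isF F n) c -> ket y *m circuit_mx c = ket (circuit_act c y).
Proof.
elim: c y => [|g c IH] y /=; first by rewrite mulmx1.
by rewrite negb_or => /andP[gF cF]; rewrite mulmxA ket_mul_gate_act // IH.
Qed.

Definition fourier_amp : algC := omega F ^+ trN (0 : F) / sqrtC (qsz F)%:R.

Lemma fourier_amp_neq0 : fourier_amp != 0.
Proof.
rewrite mulf_neq0 ?invr_eq0 ?expf_neq0 //.
  by rewrite rootC_eq0 ?pdiv_gt0 // oppr_eq0 oner_eq0.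
by rewrite sqrtC_eq0 pnatr_eq0 -lt0n; apply/card_gt0P; exists 0.
Qed.

Lemma ket_mul_F (y : cfg) a : y 0 a = 0 ->
  ket y *m gate_mx (@GF F n a) = fourier_amp *: \sum_(c : F) ket (upd y a c).
Proof.
move=> ya; rewrite /= ket_mul_opmx scaler_sumr.
rewrite (bigID (fun x : cfg => x == upd y a (x 0 a))) /= [X in _ + X]big1 ?addr0; last first.
  by move=> x /negPf xa; rewrite /ampF xa mul0r mul0r scale0r.
rewrite (reindex_onto (upd y a) (fun x : cfg => x 0 a)) /=; last by move=> x /eqP {2}->.
apply: eq_big => [c|c _]; first by rewrite upd_same !eqxx.
by rewrite /ampF upd_same eqxx ya !mul0r mul1r.
Qed.

Definition supported_on (s : seq 'I_n) (z : cfg) := [forall j, (j \notin s) ==> (z 0 j == 0)].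

Lemma supported_on_nil (z : cfg) : supported_on [::] z = (z == 0).
Proof.
apply/forallP/eqP => [z0|-> j]; last by rewrite mxE eqxx implybT.
by apply/rowP => j; rewrite mxE; apply/eqP/(implyP (z0 j)).
Qed.

Lemma supported_onP (s : seq 'I_n) (z : cfg) :
  reflect (forall j, j \notin s -> z 0 j = 0) (supported_on s z).
Proof.
apply: (iffP forallP) => [zs j js|zs j]; first exact/eqP/(implyP (zs j)).
by apply/implyP => /zs ->.
Qed.

Lemma sum_supported_on_cons (V : nmodType) (f : cfg -> V) (y : cfg) a s :
  a \notin s -> y 0 a = 0 ->
  \sum_(c : F) \sum_(z | supported_on s z) f (upd y a c + z) =
  \sum_(z | supported_on (a :: s) z) f (y + z).
Proof.
move=> as_ ya; symmetry.
rewrite (partition_big (fun z : cfg => z 0 a) predT) //=; apply: eq_bigr => c _.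
rewrite (reindex_onto (fun z => upd z a c) (fun z => upd z a 0)) /=; last first.
  by move=> z /andP[_ /eqP za]; rewrite upd_upd -za upd_id.
apply: eq_big => [z|z /andP[_ /eqP zE]]; last first.
  have za : z 0 a = 0 by rewrite -zE upd_same.
  by congr f; apply/rowP => j; rewrite !mxE; case: eqP => [->|_]; rewrite ?ya ?za ?add0r ?addr0.
rewrite upd_upd upd_same eqxx andbT.
apply/andP/supported_onP => [[/supported_onP zs /eqP <-] j js|zs].
  have [->|ja] := eqVneq j a; first by rewrite upd_same.
  by rewrite upd_other // -(upd_other z c ja) zs // inE negb_or ja.
have za : z 0 a = 0 by rewrite zs.
split; last by rewrite -[X in upd _ _ X]za upd_id.
apply/supported_onP => j; rewrite inE negb_or => /andP[ja js].
by rewrite upd_other ?zs.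
Qed.

Lemma ket_mul_F_layer (s : seq 'I_n) (y : cfg) : uniq s -> (forall a, a \in s -> y 0 a = 0) ->
  ket y *m circuit_mx (map (@GF F n) s) =
  fourier_amp ^+ size s *: \sum_(z | supported_on s z) ket (y + z).
Proof.
elim: s y => [|a s IH] y.
  move=> _ _; rewrite /= mulmx1 scale1r (bigD1 0) /=; last by rewrite supported_on_nil.
  by rewrite addr0 big1 ?addr0 // => z /andP[]; rewrite supported_on_nil => ->.
case/andP=> as_ us y0; rewrite map_cons [circuit_mx _]/= mulmxA ket_mul_F ?y0 ?mem_head //.
rewrite -scalemxAl mulmx_suml.
have step c : ket (upd y a c) *m circuit_mx (map (@GF F n) s) =
    fourier_amp ^+ size s *: \sum_(z | supported_on s z) ket (upd y a c + z).
  apply: IH => // b bs; rewrite upd_other ?y0 ?inE ?bs ?orbT //.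
  by apply: contraNneq as_ => <-.
under eq_bigr do rewrite step.
by rewrite -scaler_sumr scalerA -exprS sum_supported_on_cons // y0 ?mem_head.
Qed.

Definition valid_terms (t : 'I_n) (l : seq ('I_n * F)) :=
  all (fun pg : 'I_n * F => (pg.1 != t) && (pg.2 != 0)) l.

(* While the sources are added one at a time, qudit [t] holds the running
   combination divided by the coefficient of the next source, so that each
   source costs one [M] and one [ADD]. *)
Fixpoint scaled_adds (t : 'I_n) (prev : F) (l : seq ('I_n * F)) : seq gate :=
  match l with
  | [::] => [:: @GM F n prev t]
  | (p, gam) :: l' => @GM F n (prev / gam) t :: @GADD F n p t :: scaled_adds t gam l'
  end.

(* [t_zero] records that qudit [t] is known to be 0, so that its initial
   rescaling can be skipped. *)
Definition add_combination (t_zero : bool) (t : 'I_n) (l : seq ('I_n * F)) : seq gate :=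
  match l with
  | [::] => [::]
  | (p, gam) :: l' =>
      (if t_zero then [::] else [:: @GM F n gam^-1 t]) ++ @GADD F n p t :: scaled_adds t gam l'
  end.

Definition add_combinations (t_zero : bool) (ts : seq 'I_n) (L : 'I_n -> seq ('I_n * F)) :=
  flatten [seq add_combination t_zero t (L t) | t <- ts].

Lemma sum_terms_upd (t : 'I_n) (l : seq ('I_n * F)) (y : cfg) c : valid_terms t l ->
  \sum_(pg <- l) pg.2 * upd y t c 0 pg.1 = \sum_(pg <- l) pg.2 * y 0 pg.1.
Proof.
move=> /allP lt; apply: eq_big_seq => -[p gam] /lt /andP[/= pt _].
by rewrite upd_other.
Qed.

Lemma circuit_act_scaled_adds t prev l (y : cfg) : valid_terms t l -> prev != 0 ->
  circuit_act (scaled_adds t prev l) y =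
  upd y t (prev * y 0 t + \sum_(pg <- l) pg.2 * y 0 pg.1).
Proof.
elim: l prev y => [|[p gam] l IH] prev y /=; first by rewrite big_nil addr0.
case/andP=> /andP[/= pt gam0] lt prev0.
rewrite IH // !upd_upd !upd_same upd_other // sum_terms_upd // big_cons /=.
by congr upd; field.
Qed.

Lemma circuit_act_add_combination (t_zero : bool) t l (y : cfg) :
  valid_terms t l -> (t_zero -> y 0 t = 0) ->
  circuit_act (add_combination t_zero t l) y =
  upd y t (y 0 t + \sum_(pg <- l) pg.2 * y 0 pg.1).
Proof.
case: l => [|[p gam] l] /=; first by rewrite big_nil addr0 upd_id.
case/andP=> /andP[/= pt gam0] lt yt; rewrite big_cons /=.
case: t_zero yt => [/(_ isT) y0|_] /=.
  by rewrite circuit_act_scaled_adds // !upd_upd !upd_same sum_terms_upd // y0 addr0 add0r.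
rewrite circuit_act_scaled_adds // !upd_upd !upd_same upd_other // sum_terms_upd //.
by rewrite addrA; congr (upd _ _ (_ + _)); field.
Qed.

Lemma circuit_act_add_combinations (t_zero : bool) (ts : seq 'I_n) L (y : cfg) : uniq ts ->
  (forall t, t \in ts -> valid_terms t (L t)) ->
  (forall t pg, t \in ts -> pg \in L t -> pg.1 \notin ts) ->
  (t_zero -> forall t, t \in ts -> y 0 t = 0) ->
  circuit_act (add_combinations t_zero ts L) y =
  \row_j (if j \in ts then y 0 j + \sum_(pg <- L j) pg.2 * y 0 pg.1 else y 0 j).
Proof.
elim: ts y => [|t ts IH] y /=; first by move=> *; apply/rowP => j; rewrite !mxE.
case/andP=> tts uts Lt Lsrc yt.
have Lsrc' t' pg : t' \in t :: ts -> pg \in L t' -> pg.1 != t /\ pg.1 \notin ts.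
  by move=> t't pgL; move: (Lsrc t' pg t't pgL); rewrite inE negb_or => /andP[].
rewrite circuit_act_cat circuit_act_add_combination ?Lt ?mem_head //; last first.
  by move=> z; apply: yt; rewrite ?mem_head.
rewrite IH //; first last.
- move=> z t' t'ts; rewrite upd_other ?yt ?inE ?t'ts ?orbT //.
  by apply: contraNneq tts => <-.
- by move=> t' pg t'ts pgL; case: (Lsrc' t' pg); rewrite ?inE ?t'ts ?orbT.
- by move=> t' t'ts; apply: Lt; rewrite inE t'ts orbT.
apply/rowP => j; rewrite !mxE inE.
have [->|jt] /= := eqVneq j t; first by rewrite (negPf tts).
case: ifP => // jts; congr (_ + _); apply: eq_big_seq => pg pgL.
by rewrite upd_other //; case: (Lsrc' j pg); rewrite ?inE ?jts ?orbT.
Qed.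

Definition terms (A : {set 'I_n}) (f : 'I_n -> F) : seq ('I_n * F) :=
  [seq (i, f i) | i <- enum A & f i != 0].

Lemma sum_terms (A : {set 'I_n}) (f : 'I_n -> F) (v : cfg) :
  \sum_(pg <- terms A f) pg.2 * v 0 pg.1 = \sum_(i in A) f i * v 0 i.
Proof.
rewrite big_map big_filter big_enum_cond /= [RHS](bigID (fun i => f i != 0)) /=.
by rewrite [X in _ = _ + X]big1 ?addr0 // => i /andP[_ /negPn/eqP ->]; rewrite mul0r.
Qed.

Lemma size_terms (A : {set 'I_n}) (f : 'I_n -> F) : (size (terms A f) <= #|A|)%N.
Proof. by rewrite size_map size_filter cardE; apply: count_size. Qed.

Lemma terms_valid (A : {set 'I_n}) (f : 'I_n -> F) t : t \notin A -> valid_terms t (terms A f).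
Proof.
move=> tA; apply/allP => pg /mapP[i]; rewrite mem_filter mem_enum => /andP[fi iA] -> /=.
by rewrite fi andbT; apply: contraNneq tA => <-.
Qed.

Lemma terms_source (A : {set 'I_n}) (f : 'I_n -> F) pg : pg \in terms A f -> pg.1 \in A.
Proof. by case/mapP => i; rewrite mem_filter mem_enum => /andP[_ iA] ->. Qed.

Definition classical_wf (g : gate) := gate_wf g && ~~ isF g.

Lemma classical_wf_scaled_adds t prev l :
  valid_terms t l -> prev != 0 -> all classical_wf (scaled_adds t prev l).
Proof.
elim: l prev => [|[p gam] l IH] prev /=; first by rewrite /classical_wf /= => _ ->.
case/andP=> /andP[/= pt gam0] lt prev0.
by rewrite /classical_wf /= pt mulf_neq0 ?invr_eq0 ?IH.
Qed.

Lemma classical_wf_add_combination t_zero t l :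
  valid_terms t l -> all classical_wf (add_combination t_zero t l).
Proof.
case: l => [|[p gam] l] //= /andP[/andP[/= pt gam0] lt].
rewrite all_cat /= {2}/classical_wf /= pt classical_wf_scaled_adds // andbT.
by case: t_zero; rewrite //= /classical_wf /= invr_eq0 gam0.
Qed.

Lemma classical_wf_add_combinations t_zero ts L :
  (forall t, t \in ts -> valid_terms t (L t)) -> all classical_wf (add_combinations t_zero ts L).
Proof.
elim: ts => [|t ts IH] //= Lt; rewrite /add_combinations /= all_cat.
rewrite classical_wf_add_combination ?Lt ?mem_head //=.
by apply: IH => t' t'ts; apply: Lt; rewrite inE t'ts orbT.
Qed.

Lemma count_add_combinations (a : pred gate) t_zero ts L :
  count a (add_combinations t_zero ts L) = \sum_(t <- ts) count a (add_combination t_zero t (L t)).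
Proof. by rewrite count_flatten sumnE !big_map. Qed.

Lemma count_ADD_add_combination t_zero t l :
  count (@isADD F n) (add_combination t_zero t l) = size l.
Proof.
have count_ADD_scaled_adds prev l' : count (@isADD F n) (scaled_adds t prev l') = size l'.
  by elim: l' prev => [|[p g] l' IH] prev //=; rewrite IH.
by case: l => [|[p g] l] //=; rewrite count_cat /= count_ADD_scaled_adds; case: t_zero.
Qed.

Lemma count_M_add_combination t_zero t l :
  count (@isM F n) (add_combination t_zero t l) = (size l + (~~ t_zero && (0 < size l)))%N.
Proof.
have count_M_scaled_adds prev l' : count (@isM F n) (scaled_adds t prev l') = (size l').+1.
  by elim: l' prev => [|[p g] l' IH] prev //=; rewrite IH.
case: l => [|[p g] l] /=; first by rewrite andbF.
by rewrite count_cat /= count_M_scaled_adds; case: t_zero => /=; lia.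
Qed.

End Circuits.

(** * The encoder *)

Section CssStates.
Variables (F : finFieldType) (n : nat) (C2 : {vspace 'rV[F]_n}).
Local Notation cfg := 'rV[F]_n.

Definition dual_norm : algC := sqrtC #|[pred y : cfg | in_dual C2 y]|%:R.

Lemma dual_norm_neq0 : dual_norm != 0.
Proof.
rewrite sqrtC_eq0 pnatr_eq0 -lt0n; apply/card_gt0P; exists 0; rewrite inE.
by apply/in_dualP => c _; rewrite /dotF big1 // => j _; rewrite mxE mul0r.
Qed.

Lemma sum_dual_ket (w : cfg) :
  \sum_(d | in_dual C2 d) ket (d + w) = dual_norm *: css_state C2 w.
Proof. by rewrite scalerA divff ?dual_norm_neq0 // scale1r. Qed.

Lemma css_state_shift (w d : cfg) : in_dual C2 d -> css_state C2 (w + d) = css_state C2 w.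
Proof.
move=> dC; congr (_ *: _); rewrite (reindex_inj (addIr (- d))) /=.
apply: eq_big => [c|c _]; last by rewrite addrCA subrK addrC.
apply/idP/idP => [/in_dualD/(_ dC)|cC]; last by rewrite in_dualB.
by rewrite subrK.
Qed.

End CssStates.

Section Encoder.
Variables (F : finFieldType) (n : nat) (C1 C2 : {vspace 'rV[F]_n}).
Local Notation cfg := 'rV[F]_n.
Hypothesis dual_sub : forall x : cfg, in_dual C2 x -> x \in C1.
Variables (Q : {set 'I_n}) (g : 'I_n -> cfg) (I : {set 'I_n}) (e : 'I_n -> cfg).
Hypothesis gC : forall q, q \in Q -> g q \in C2.
Hypothesis g_delta : forall q q', q \in Q -> q' \in Q -> g q 0 q' = (q == q')%:R.
Hypothesis g_span : forall c, c \in C2 -> c = \sum_(q in Q) c 0 q *: g q.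
Local Notation S := (~: Q).
Local Notation h := (dual_vec Q g).
Hypothesis eB : partial_basis C1 S I e.
Hypothesis e_span : spans_kernel C1 S I e.

Lemma I_subQ i : i \in I -> i \in Q.
Proof. by case: eB => dI _ _ _ /(disjointFr dI); rewrite inE => /negbFE. Qed.

Definition targets := Q :\: I.
Definition message_stage :=
  add_combinations true (enum targets) (fun t => terms I (fun i => e i 0 t)).
Definition dual_stage :=
  add_combinations false (enum Q) (fun t => terms S (fun s => h s 0 t)).
Definition encoder := map (@GF F n) (enum S) ++ message_stage ++ dual_stage.

Definition restr (A : {set 'I_n}) (u : cfg) : cfg := \row_j (if j \in A then u 0 j else 0).
Definition codeword (v : cfg) := \sum_(i in I) v 0 i *: e i.
Definition dual_word (v : cfg) := \sum_(s in S) v 0 s *: h s.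

Lemma coord_codeword_S (v : cfg) s : s \in S -> codeword v 0 s = 0.
Proof.
case: eB => _ _ e0 _ sS; rewrite coord_sum big1 // => i iI.
by rewrite e0 ?mulr0.
Qed.

Lemma coord_codeword_I (v : cfg) i : i \in I -> codeword v 0 i = v 0 i.
Proof. by case: eB => _ _ _ ed iI; rewrite coord_sum_delta. Qed.

Lemma coord_dual_word_S (v : cfg) s : s \in S -> dual_word v 0 s = v 0 s.
Proof.
move=> sS; rewrite coord_sum_delta // => s1 s2 _.
by rewrite inE; apply: dual_vec_delta.
Qed.

Lemma codeword_in_C1 (v : cfg) : codeword v \in C1.
Proof. by case: eB => _ eC _ _; rewrite memv_suml // => i iI; rewrite memvZ // eC. Qed.

Lemma dual_word_in_dual (v : cfg) : in_dual C2 (dual_word v).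
Proof.
apply: in_dual_sum => s; rewrite inE => sQ.
exact: dual_vec_in_dual g_delta g_span _ sQ.
Qed.

Lemma eq_codeword (u v : cfg) : {in I, forall i, u 0 i = v 0 i} -> codeword u = codeword v.
Proof. by move=> uv; apply: eq_bigr => i /uv ->. Qed.

Lemma eq_dual_word (u v : cfg) : {in S, forall s, u 0 s = v 0 s} -> dual_word u = dual_word v.
Proof. by move=> uv; apply: eq_bigr => s /uv ->. Qed.

Lemma act_message_stage (v : cfg) : {in targets, forall t, v 0 t = 0} ->
  circuit_act message_stage v = codeword v + restr S v.
Proof.
move=> v0; rewrite circuit_act_add_combinations ?enum_uniq //; first last.
- by move=> _ t; rewrite mem_enum; apply: v0.
- by move=> t pg _ /terms_source pI; rewrite mem_enum inE pI.
- by move=> t; rewrite mem_enum inE => /andP[tI _]; apply: terms_valid.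
apply/rowP => j; rewrite !mxE mem_enum sum_terms.
have [jT|jT] := boolP (j \in targets).
  have jS : j \notin S by move: jT; rewrite !inE negbK => /andP[].
  rewrite v0 // add0r (negPf jS) addr0 coord_sum.
  by apply: eq_bigr => i _; rewrite mulrC.
move: jT; rewrite !inE negb_and negbK => /orP[jI|jS].
  by rewrite coord_codeword_I // (I_subQ jI) addr0.
by rewrite coord_codeword_S ?inE // add0r jS.
Qed.

Lemma act_dual_stage (u : cfg) : circuit_act dual_stage u = restr Q u + dual_word u.
Proof.
rewrite circuit_act_add_combinations ?enum_uniq //; first last.
- by move=> t pg _ /terms_source; rewrite mem_enum inE.
- by move=> t; rewrite mem_enum => tQ; apply: terms_valid; rewrite inE tQ.
apply/rowP => j; rewrite !mxE mem_enum sum_terms.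
case: ifPn => jQ; last by rewrite add0r coord_dual_word_S ?inE.
by rewrite /dual_word coord_sum; congr (_ + _); apply: eq_bigr => s _; rewrite mulrC.
Qed.

Lemma act_linear_stages (v : cfg) : {in targets, forall t, v 0 t = 0} ->
  circuit_act (message_stage ++ dual_stage) v = codeword v + dual_word v.
Proof.
move=> v0; rewrite circuit_act_cat act_message_stage // act_dual_stage; congr (_ + _).
  apply/rowP => j; rewrite !mxE; case: ifPn => jQ.
    by rewrite inE jQ addr0.
  by rewrite coord_codeword_S ?inE.
by apply: eq_dual_word => s sS; rewrite !mxE coord_codeword_S // sS add0r.
Qed.

Lemma restr_dual_word z : supported_on (enum S) z -> restr S (dual_word z) = z.
Proof.
move/supported_onP => z0; apply/rowP => t; rewrite mxE.
case: ifPn => tS; first exact: coord_dual_word_S.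
by rewrite z0 ?mem_enum.
Qed.

Lemma dual_word_restr d : in_dual C2 d -> dual_word (restr S d) = d.
Proof.
move=> dC; rewrite [RHS](in_dual_expand gC g_delta dC).
by apply: eq_bigr => s sS; rewrite mxE sS.
Qed.

Lemma reindex_dual_word (V : nmodType) (f : cfg -> V) :
  \sum_(z | supported_on (enum S) z) f (dual_word z) = \sum_(d | in_dual C2 d) f d.
Proof.
rewrite [RHS](reindex_onto dual_word (restr S)); last exact: dual_word_restr.
apply: eq_big => // z; rewrite dual_word_in_dual /=.
apply/idP/eqP => [/restr_dual_word //|<-].
by apply/supported_onP => j; rewrite mem_enum mxE => /negPf ->.
Qed.

Lemma linear_stages_classical : all (classical_wf (n:=n)) (message_stage ++ dual_stage).
Proof.
rewrite all_cat !classical_wf_add_combinations // => t; rewrite mem_enum.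
  by move=> tQ; apply: terms_valid; rewrite inE tQ.
by rewrite inE => /andP[tI _]; apply: terms_valid.
Qed.

Lemma linear_stages_noF : ~~ has (@isF F n) (message_stage ++ dual_stage).
Proof. by rewrite -all_predC; apply: sub_all linear_stages_classical => ? /andP[]. Qed.

Lemma ket_mul_encoder x : supp_in I x ->
  ket x *m circuit_mx encoder =
  (fourier_amp F ^+ #|S| * dual_norm C2) *: css_state C2 (codeword x).
Proof.
move/forallP => xI; have x0 j : j \notin I -> x 0 j = 0 by move/(implyP (xI j))/eqP.
rewrite circuit_mx_cat mulmxA ket_mul_F_layer ?enum_uniq //; last first.
  by move=> a; rewrite mem_enum inE => aQ; apply: x0; apply: contra aQ; apply: I_subQ.
rewrite -scalemxAl mulmx_suml -cardE -scalerA -sum_dual_ket; congr (_ *: _).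
rewrite -(reindex_dual_word (fun d => ket (d + codeword x))).
apply: eq_bigr => z /supported_onP z0.
rewrite ket_mul_circuit_act ?linear_stages_noF //.
rewrite act_linear_stages; last first.
  move=> t; rewrite inE => /andP[tI tQ].
  by rewrite mxE x0 // z0 ?addr0 // mem_enum inE tQ.
rewrite addrC; congr (ket (_ + _)).
  apply: eq_dual_word => s sS; rewrite mxE x0 ?add0r //; apply: contraL sS.
  by rewrite inE negbK; apply: I_subQ.
by apply: eq_codeword => i iI; rewrite mxE z0 ?addr0 // mem_enum inE I_subQ.
Qed.

Lemma css_state_encoded w : w \in C1 ->
  exists2 x, supp_in I x & css_state C2 w = css_state C2 (codeword x).
Proof.
move=> wC; pose w' := w - dual_word w.
have w'C : w' \in C1 by rewrite memvB // dual_sub // dual_word_in_dual.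
have w'S s : s \in S -> w' 0 s = 0 by move=> sS; rewrite !mxE coord_dual_word_S // subrr.
exists (restr I w'); first by apply/forallP => j; rewrite mxE; case: ifP => //= _; rewrite eqxx.
rewrite -[in LHS](subrK (dual_word w) w) css_state_shift ?dual_word_in_dual //.
rewrite -/w'; congr css_state.
by rewrite {1}(e_span w'C w'S); apply: eq_bigr => i iI; rewrite [in RHS]mxE iI.
Qed.

Lemma encoder_amp_neq0 : fourier_amp F ^+ #|S| * dual_norm C2 != 0.
Proof. by rewrite mulf_neq0 ?expf_neq0 ?fourier_amp_neq0 ?dual_norm_neq0. Qed.

Lemma encoder_spans : (input_space F I *m circuit_mx encoder :=: css_space C1 C2)%MS.
Proof.
apply: eqmx_trans (sumsmxMr _ _ _) _; apply/eqmxP/andP; split.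
  apply/sumsmx_subP => x xI; rewrite (eqmxMr _ (genmxE _)) ket_mul_encoder //.
  by apply/scalemx_sub/(sumsmx_sup (codeword x)); rewrite ?genmxE ?codeword_in_C1.
apply/sumsmx_subP => w wC; rewrite genmxE.
have [x xI ->] := css_state_encoded wC.
rewrite -(canLR (scalerK encoder_amp_neq0) (ket_mul_encoder xI)).
by apply/scalemx_sub/(sumsmx_sup x); rewrite ?(eqmxMr _ (genmxE _)).
Qed.

Lemma encoder_wf : all (@gate_wf F n) encoder.
Proof.
rewrite all_cat all_map; apply/andP; split; first exact/allP.
by apply: sub_all linear_stages_classical => ? /andP[].
Qed.

Lemma count_F_encoder : count (@isF F n) encoder = #|S|.
Proof.
rewrite count_cat count_map (eq_count (a2 := predT)) // count_predT -cardE.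
suff -> : count (@isF F n) (message_stage ++ dual_stage) = 0%N by rewrite addn0.
by apply/eqP; rewrite -leqn0 leqNgt -has_count linear_stages_noF.
Qed.

Lemma count_ADD_encoder :
  (count (@isADD F n) encoder <= #|targets| * #|I| + #|Q| * #|S|)%N.
Proof.
rewrite !count_cat count_map (eq_count (a2 := pred0)) // count_pred0 add0n.
rewrite !count_add_combinations !big_enum /=.
apply: leq_add; rewrite -sum_nat_const; apply: leq_sum => t _;
  by rewrite count_ADD_add_combination size_terms.
Qed.

Lemma count_M_encoder :
  (count (@isM F n) encoder <= #|targets| * #|I| + #|Q| * (#|S| + (0 < #|S|)))%N.
Proof.
rewrite !count_cat count_map (eq_count (a2 := pred0)) // count_pred0 add0n.
rewrite !count_add_combinations !big_enum /=.
apply: leq_add; rewrite -sum_nat_const; apply: leq_sum => t _.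
  by rewrite count_M_add_combination addn0 size_terms.
rewrite count_M_add_combination /=.
have := size_terms S (fun s => h s 0 t); case: (size _) => [|m] //= le_m.
by rewrite (leq_ltn_trans (leq0n m) le_m) leq_add2r.
Qed.

Lemma card_targets : (#|targets| + #|S| + #|I|)%N = n.
Proof.
have IQ : I \subset Q by apply/subsetP => i; apply: I_subQ.
by rewrite addnAC cardsD (setIidPr IQ) subnK ?subset_leq_card // cardsC card_ord.
Qed.

End Encoder.

Lemma binS2_double m : ('C(m.+1, 2) * 2 = m.+1 * m)%N.
Proof. by elim: m => [|m IH] //; rewrite binS bin1 mulnDl IH; lia. Qed.

(* Below t = #|Q :\: I|, r = #|~: Q| = n - k2 and a = #|I| = k, so r + a = k1. *)
Lemma add_gate_budget t r a q m : (t + r + a = m)%N -> (r + q = m)%N ->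
  (t * a + q * r <= (r + a) * m - 'C((r + a).+1, 2))%N.
Proof.
move=> tram rqm; have := binS2_double (r + a).
have r_sq : (r <= r * r)%N by case: r {tram rqm} => // r; rewrite leq_pmulr.
have a_sq : (a <= a * a)%N by case: a {tram rqm} => // a; rewrite leq_pmulr.
have -> : q = (t + a)%N by lia.
by rewrite -tram; lia.
Qed.

Lemma mul_gate_budget t r a q m : (t + r + a = m)%N -> (r + q = m)%N ->
  (t * a + q * (r + (0 < r)) <= (r + a) * m - 'C((r + a).+1, 2) + (m - 1))%N.
Proof.
move=> tram rqm; have := add_gate_budget tram rqm.
case: r tram rqm => [|r] tram rqm /=.
  by rewrite !addn0 => /leq_trans; apply; rewrite leq_addr.
by rewrite mulnDr muln1 addnA => le_add; apply: leq_add => //; lia.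
Qed.

Theorem proposition1 (F : finFieldType) (n : nat) (C1 C2 : {vspace 'rV[F]_n}) :
  (forall x : 'rV[F]_n, in_dual C2 x -> x \in C1) ->
  let k1 := \dim C1 in
  let k2 := \dim C2 in
  let k := (k1 + k2 - n)%N in
  let A := (k1 * n - 'C(k1.+1, 2))%N in
  exists (c : seq (gate F n)) (I : {set 'I_n}),
    [/\ all (@gate_wf F n) c,
        #|I| = k &
        (input_space F I *m circuit_mx c == css_space C1 C2)%MS] /\
    [/\ count (@isF F n) c = (n - k2)%N,
        (count (@isADD F n) c <= A)%N &
        (count (@isM F n) c <= A + (n - 1))%N].
Proof.
move=> dual_sub k1 k2 k A.
have [Q [g [[_ gC _ g_delta] cardQ g_span0]]] := @exists_systematic_basis F n C2 set0 (fun _ => 0)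
  ltac:(by move=> p; rewrite inE) ltac:(by move=> p p'; rewrite inE).
have g_span c : c \in C2 -> c = \sum_(q in Q) c 0 q *: g q.
  by move=> cC; apply: g_span0 => // p; rewrite inE.
have hC1 s : s \in ~: Q -> dual_vec Q g s \in C1.
  by rewrite inE => sQ; apply/dual_sub/(dual_vec_in_dual g_delta g_span).
have h_delta s s' : s \in ~: Q -> s' \in ~: Q -> dual_vec Q g s 0 s' = (s == s')%:R.
  by move=> _; rewrite inE; apply: dual_vec_delta.
have [I [e [eB cardI e_span]]] := exists_systematic_basis hC1 h_delta.
have cardT := card_targets eB.
have cardSQ : (#|~: Q| + #|Q|)%N = n by rewrite addnC cardsC card_ord.
rewrite cards0 /= in cardQ.
exists (encoder Q g I e), I; split; first split.
- exact: encoder_wf.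
- by rewrite /k /k1 /k2 -cardI -cardQ add0n addnAC cardSQ addKn.
- exact/eqmxP/(encoder_spans dual_sub gC g_delta g_span eB e_span).
rewrite /A /k1 -cardI; split.
- by rewrite count_F_encoder /k2 -cardQ add0n -[X in (X - _)%N]cardSQ addnK.
- exact: leq_trans (count_ADD_encoder Q g I e) (add_gate_budget cardT cardSQ).
- exact: leq_trans (count_M_encoder Q g I e) (mul_gate_budget cardT cardSQ).
Qed.
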